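(* Let $r,c\ge3$, $n=rc$, let $\mathcal{M}\subseteq\{1,\dots,n\}$ be a set of sampled pixels (vectorized indexing), $A=\mathbf{I}_{\mathcal{M}}$, $\varepsilon>0$, and $y\in\mathbb{R}^{|\mathcal{M}|}$ (indexed by $\mathcal{M}$). Let $Z\in\mathbb{R}^{r\times c}$, $z=\mathrm{vec}(Z)$, be feasible for $\min_{z'}\|\Delta z'\|_1$ subject to $\|Az'-y\|_\infty\le\varepsilon$. With $\mathcal{A}=\{i\in\mathcal{M}:|y_i-z_i|=\varepsilon\}$, $\mathcal{A}_\uparrow=\{i\in\mathcal{M}: y_i-z_i=\varepsilon\}$, $\mathcal{A}_\downarrow=\{i\in\mathcal{M}: y_i-z_i=-\varepsilon\}$ and $\bar{\mathcal{A}}=\mathcal{M}\setminus\mathcal{A}$, $Z$ is a minimizer if and only if there exists $u\in\mathbb{R}^{2(n-r-c)}$ such that $$(\Delta^{\mathsf{T}})_{\overline{\mathcal{M}}\cup\bar{\mathcal{A}}}\,u=\mathbf{0},\quad u_{\mathcal{I}}=\mathrm{sign}(\Delta z)_{\mathcal{I}},\quad \|u\|_\infty\le1,\quad (\Delta^{\mathsf{T}})_{\mathcal{A}_\uparrow}u\ge\mathbf{0},\quad (\Delta^{\mathsf{T}})_{\mathcal{A}_\downarrow}u\le\mathbf{0},$$ where $\mathcal{I}$ is the set of indices of nonzero entries of $\Delta z$ and $\overline{\mathcal{M}}=\{1,\dots,n\}\setminus\mathcal{M}$.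
   Context: $\mathrm{vec}$ stacks columns (pixel $(i,j)\mapsto$ index $(j-1)r+i$). For $p\ge3$, $D^{(p)}\in\mathbb{R}^{(p-2)\times p}$ is the second-order difference operator with $k$-th row having entries $1,-2,1$ in columns $k,k+1,k+2$; $D_V=D^{(r)}$, $D_H=D^{(c)}$, $\Delta=\begin{bmatrix}\mathbf{I}_c\otimes D_V\\ D_H\otimes\mathbf{I}_r\end{bmatrix}\in\mathbb{R}^{2(n-r-c)\times n}$. $\mathbf{I}_{\mathcal{M}}$ consists of the rows of the identity indexed by $\mathcal{M}$; $M_{\mathcal{S}}$ denotes rows of $M$ indexed by $\mathcal{S}$, $v_{\mathcal{S}}$ the subvector; $\mathrm{sign}$ is entrywise with $\mathrm{sign}(0)=0$; inequalities are entrywise. *)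

From HB Require Import structures.
From mathcomp Require Import all_boot all_order all_algebra.
From mathcomp Require Import reals.
Set Implicit Arguments. Unset Strict Implicit. Unset Printing Implicit Defensive.
Import Order.TTheory GRing.Theory Num.Theory.
Local Open Scope ring_scope.

Lemma idx_pos (m p : nat) (k : 'I_(m * p)) : (0 < p)%N.
Proof. case: p k => [|p] [k Hk] //; by rewrite muln0 in Hk. Qed.

Lemma idx_hi_lt (m p : nat) (k : 'I_(m * p)) : (k %/ p < m)%N.
Proof. by rewrite ltn_divLR ?(idx_pos k) // ltn_ord. Qed.

Lemma idx_lo_lt (m p : nat) (k : 'I_(m * p)) : (k %% p < p)%N.
Proof. by rewrite ltn_mod (idx_pos k). Qed.

Definition idx_hi (m p : nat) (k : 'I_(m * p)) : 'I_m := Ordinal (idx_hi_lt k).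
Definition idx_lo (m p : nat) (k : 'I_(m * p)) : 'I_p := Ordinal (idx_lo_lt k).

(* Kronecker product: (A ⊗ B)[(i1*p+i2),(j1*q+j2)] = A[i1,j1] * B[i2,j2]. *)
Definition kron (R : nzRingType) (m n p q : nat)
  (A : 'M[R]_(m, n)) (B : 'M[R]_(p, q)) : 'M[R]_(m * p, n * q) :=
  \matrix_(k, l) (A (idx_hi k) (idx_hi l) * B (idx_lo k) (idx_lo l)).

(* Column-stacking vectorisation: pixel (i,j) |-> index j*r + i (0-based). *)
Definition vecc (R : nzRingType) (r c : nat) (Z : 'M[R]_(r, c)) : 'cV[R]_(c * r) :=
  \col_k Z (idx_lo k) (idx_hi k).

Definition D2 (R : nzRingType) (p : nat) : 'M[R]_(p - 2, p) :=
  \matrix_(k, j) (if (j == k :> nat) then 1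
                  else if (j == k.+1 :> nat) then -2
                  else if (j == k.+2 :> nat) then 1 else 0).

(* Delta = [ I_c ⊗ D_V ; D_H ⊗ I_r ],  of size 2(n-r-c) x n with n = r c. *)
Definition Delta (R : nzRingType) (r c : nat) :
  'M[R]_(c * (r - 2) + (c - 2) * r, c * r) :=
  col_mx (kron (1%:M : 'M[R]_c) (D2 R r)) (kron (D2 R c) (1%:M : 'M[R]_r)).

Definition l1norm (R : numDomainType) (m : nat) (v : 'cV[R]_m) : R :=
  \sum_k `|v k 0|.

(* Feasibility: || I_M z - y ||_inf <= eps  (y only read on M). *)
Definition feasible (R : numDomainType) (n : nat) (M : {set 'I_n})
  (y : 'cV[R]_n) (eps : R) (z : 'cV[R]_n) : Prop :=
  forall i, i \in M -> `|z i 0 - y i 0| <= eps.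

From HB Require Import structures.
From mathcomp Require Import all_boot all_order all_algebra.
From mathcomp Require Import reals.
From mathcomp Require Import ring lra.
Import Order.TTheory GRing.Theory Num.Theory.
Local Open Scope ring_scope.
Set Implicit Arguments. Unset Strict Implicit. Unset Printing Implicit Defensive.

(* The five conditions on [u] form a finite system of linear inequalities,
   so by Farkas' lemma (via Fourier-Motzkin elimination) they fail
   only if a nonnegative combination of them reads [0 <= b] with [b < 0].
   Unwinding such a combination yields a direction [d] that keeps [z]
   feasible for small steps and along which the one-sided derivative of
   [l1norm (Delta *m _)] at [z] is negative, contradicting minimality.
   Conversely a certificate gives, by complementary slackness,
   [l1norm (Delta z) = <Delta^T u, z> <= <Delta^T u, z'> <= l1norm (Delta z')]. *)

Lemma exists_between (R : realDomainType) (Ls Us : seq R) :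
  (forall l u, l \in Ls -> u \in Us -> l <= u) ->
  exists t, (forall l, l \in Ls -> l <= t) /\ (forall u, u \in Us -> t <= u).
Proof.
elim: Ls => [|l Ls IH] lsU.
  elim: Us {lsU} => [|u Us [t [_ tU]]]; first by exists 0.
  exists (Num.min u t); split=> // w; rewrite inE => /orP[/eqP->|/tU wt].
    by rewrite ge_min lexx.
  by rewrite ge_min wt orbT.
have [|t [Lt tU]] := IH.
  by move=> l' u l'Ls uUs; apply: lsU; rewrite // inE l'Ls orbT.
exists (Num.max l t); split => [w|u uUs].
  by rewrite inE => /orP[/eqP->|/Lt wt]; rewrite le_max ?lexx // wt orbT.
by rewrite ge_max tU // andbT lsU // inE eqxx.
Qed.

Lemma exists_small_step (R : realFieldType) (I : finType) (P : pred I) (a b : I -> R) :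
  (forall i, P i -> 0 < b i) ->
  exists2 t, 0 < t & forall i, P i -> t * `|a i| <= b i.
Proof.
move=> b_gt0; pose S := \sum_(i | P i) `|a i| / b i.
have ratio_ge0 i : P i -> 0 <= `|a i| / b i.
  by move=> Pi; rewrite divr_ge0 ?normr_ge0 ?ltW ?b_gt0.
have S_ge0 : 0 <= S by apply: sumr_ge0.
exists (1 + S)^-1 => [|i Pi]; first by rewrite invr_gt0; lra.
have bi_gt0 := b_gt0 i Pi.
have term_le : `|a i| / b i <= S.
  by rewrite /S (bigD1 i) //= lerDl; apply: sumr_ge0 => k /andP [/ratio_ge0].
rewrite mulrC -ler_pdivlMr ?invr_gt0 1?ltr_pwDl // invrK.
by move: term_le; rewrite ler_pdivrMr //; nra.
Qed.

Lemma normr_add_small (R : realDomainType) (a e : R) : a != 0 -> `|e| <= `|a| ->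
  `|a + e| = Num.sg a * (a + e).
Proof.
move=> a0; rewrite ler_norml => /andP [lo hi].
case: (ltrgtP a 0) => [a_lt0|a_gt0|a_eq0]; last by rewrite a_eq0 eqxx in a0.
- rewrite ltr0_sg // mulN1r ler0_norm //; rewrite ltr0_norm // in lo hi; lra.
- rewrite gtr0_sg // mul1r ger0_norm //; rewrite gtr0_norm // in lo hi; lra.
Qed.

Lemma box_step (R : realDomainType) (w d t eps : R) : `|w| <= eps -> 0 <= t ->
  t * `|d| <= eps - Num.sg d * w -> `|w + t * d| <= eps.
Proof.
move=> + t_ge0; rewrite !ler_norml => /andP [lo hi].
case: (ltrgtP d 0) => [d_lt0|d_gt0|->]; last by rewrite mulr0 addr0 lo hi.
- rewrite ltr0_sg // ltr0_norm // => step.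
  have td : t * d <= 0 by rewrite mulr_ge0_le0 // ltW.
  apply/andP; split; lra.
- rewrite gtr0_sg // gtr0_norm // => step.
  have td : 0 <= t * d by rewrite mulr_ge0 // ltW.
  apply/andP; split; lra.
Qed.

Lemma box_slack_gt0 (R : realDomainType) (w d eps : R) : 0 < eps -> `|w| <= eps ->
  (w = - eps -> 0 <= d) -> (w = eps -> d <= 0) -> 0 < eps - Num.sg d * w.
Proof.
move=> eps_gt0; rewrite ler_norml => /andP [lo hi] at_lo at_hi.
case: (ltrgtP d 0) => [d_lt0|d_gt0|->]; rewrite ?sgr0 ?mul0r ?subr0 //.
- have ne : w != - eps by apply/eqP => e; have := at_lo e; lra.
  have : - eps < w by rewrite lt_def ne lo.
  by rewrite ltr0_sg // mulN1r; lra.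
- have ne : eps != w by apply/eqP => e; have := at_hi (esym e); lra.
  have : w < eps by rewrite lt_def ne hi.
  by rewrite gtr0_sg // mul1r; lra.
Qed.

Lemma sum_mul_trmx (R : comPzRingType) m n (A : 'M[R]_(m, n))
    (u : 'cV[R]_m) (x : 'cV[R]_n) :
  \sum_k u k 0 * (A *m x) k 0 = \sum_i (A^T *m u) i 0 * x i 0.
Proof.
have dotE (p : nat) (w w' : 'cV[R]_p) : \sum_k w k 0 * w' k 0 = (w^T *m w') 0 0.
  by rewrite mxE; apply: eq_bigr => k _; rewrite mxE.
by rewrite !dotE trmx_mul trmxK mulmxA.
Qed.

Lemma trmx_unit_mul (R : comPzRingType) n (s : R) (i : 'I_n) (u : 'cV[R]_n) :
  ((s *: delta_mx i 0 : 'cV_n)^T *m u) 0 0 = s * u i 0.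
Proof. by rewrite linearZ /= trmx_delta -scalemxAl -(rowE i u) !mxE. Qed.

Definition unit_dirs (R : pzRingType) n : seq 'cV[R]_n :=
  [seq s *: delta_mx i 0 | i <- enum 'I_n, s <- [:: 1; -1]].

Lemma mem_unit_dirs (R : pzRingType) n (i : 'I_n) (s : R) :
  s \in [:: 1; -1] -> s *: delta_mx i 0 \in unit_dirs R n.
Proof. by move=> s_pm; apply: allpairs_f; rewrite ?mem_enum. Qed.

Section Farkas.
Variables (R : realFieldType) (N : nat).
Implicit Types (C : seq ('rV[R]_N * R)) (a : 'rV[R]_N) (b : R) (x : 'cV[R]_N).

Inductive cone C : 'rV[R]_N -> R -> Prop :=
| cone0 : cone C 0 0
| cone_mem c : c \in C -> cone C c.1 c.2
| coneD a b a' b' : cone C a b -> cone C a' b' -> cone C (a + a') (b + b')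
| coneZ k a b : 0 <= k -> cone C a b -> cone C (k *: a) (k * b).

Definition satisfies C x := forall c, c \in C -> (c.1 *m x) 0 0 <= c.2.

Lemma cone_trans C C' :
  (forall c, c \in C' -> cone C c.1 c.2) -> forall a b, cone C' a b -> cone C a b.
Proof.
move=> C'C a b; elim=> [|c /C'C //|? ? ? ? _ ? _ ?|? ? ? ? _ ?].
- exact: cone0.
- exact: coneD.
- exact: coneZ.
Qed.

Lemma cone_coord0 C (i : 'I_N) a b :
  (forall c, c \in C -> c.1 0 i = 0) -> cone C a b -> a 0 i = 0.
Proof.
move=> Ci; elim=> [|c /Ci|? ? ? ? _ h _ h'|? ? ? ? _ h]; rewrite ?mxE ?h ?h' //.
- by rewrite addr0.
- by rewrite mulr0.
Qed.

Lemma mulmx_shift_delta_entry a x (j : 'I_N) t :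
  (a *m (x + t *: delta_mx j 0)) 0 0 = (a *m x) 0 0 + t * a 0 j.
Proof. by rewrite mulmxDr -scalemxAr -colE !mxE. Qed.

Lemma mulmx_lincomb_entry k k' a a' x :
  ((k *: a + k' *: a') *m x) 0 0 = k * (a *m x) 0 0 + k' * (a' *m x) 0 0.
Proof. by rewrite mulmxDl -!scalemxAl !mxE. Qed.

Section Elimination.
Variables (j : 'I_N) (C : seq ('rV[R]_N * R)).

Definition coord (c : 'rV[R]_N * R) := c.1 0 j.
Definition pos_part := [seq c <- C | 0 < coord c].
Definition neg_part := [seq c <- C | coord c < 0].

Definition elim_pair (p q : 'rV[R]_N * R) :=
  ((- q.1 0 j) *: p.1 + p.1 0 j *: q.1, (- q.1 0 j) * p.2 + p.1 0 j * q.2).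

Definition eliminate :=
  [seq c <- C | coord c == 0] ++ [seq elim_pair p q | p <- pos_part, q <- neg_part].

Lemma eliminate_cone c : c \in eliminate -> cone C c.1 c.2 /\ c.1 0 j = 0.
Proof.
rewrite mem_cat => /orP [|/allpairsP [[p q] [/=]]].
  by rewrite mem_filter => /andP [/eqP cj cC]; split => //; exact: cone_mem.
rewrite !mem_filter => /andP [pj pC] /andP [qj qC] ->; split.
  apply: coneD; apply: coneZ; rewrite ?oppr_ge0 ?ltW //; exact: cone_mem.
by rewrite /= !mxE; ring.
Qed.

Lemma eliminate_lift x : satisfies eliminate x ->
  exists t, satisfies C (x + t *: delta_mx j 0).
Proof.
move=> xsat.
pose bound (c : 'rV[R]_N * R) := (c.2 - (c.1 *m x) 0 0) / c.1 0 j.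
have [|t [lo_t t_up]] := @exists_between _ (map bound neg_part) (map bound pos_part).
  move=> _ _ /mapP [q qN ->] /mapP [p pP ->].
  have /xsat : elim_pair p q \in eliminate.
    by rewrite mem_cat; apply/orP; right; apply: allpairs_f.
  move: qN pP; rewrite !mem_filter => /andP [qj _] /andP [pj _].
  rewrite /= mulmx_lincomb_entry => h.
  rewrite /bound ler_pdivlMr // mulrAC ler_ndivrMr //; nra.
exists t => c cC; rewrite mulmx_shift_delta_entry.
case: (ltrgtP (coord c) 0) => cj.
- have : bound c <= t by apply: lo_t; apply: map_f; rewrite mem_filter cj.
  by rewrite ler_ndivrMr //; lra.
- have : t <= bound c by apply: t_up; apply: map_f; rewrite mem_filter cj.
  by rewrite ler_pdivlMr //; lra.
- by rewrite [c.1 0 j]cj mulr0 addr0 xsat // mem_cat mem_filter cj eqxx cC.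
Qed.

End Elimination.

Lemma farkas C : (forall b, cone C 0 b -> 0 <= b) -> exists x, satisfies C x.
Proof.
(* Induct on the number of leading coordinates the constraints may involve. *)
suff farkas_from : forall m, (m <= N)%N -> forall C,
    (forall c (i : 'I_N), c \in C -> (m <= i)%N -> c.1 0 i = 0) ->
    (forall b, cone C 0 b -> 0 <= b) -> exists x, satisfies C x.
  by apply: (farkas_from N) => // c i _; rewrite leqNgt ltn_ord.
elim=> [|m IH] mN {}C Cm C0.
  exists 0 => c cC; rewrite mulmx0 mxE; apply: C0.
  suff <- : c.1 = 0 by exact: cone_mem.
  by apply/rowP => i; rewrite mxE Cm.
pose j := Ordinal mN.
have [||x xsat] := IH (ltnW mN) (eliminate j C).
- move=> c i /eliminate_cone [cC cj]; rewrite leq_eqVlt => /orP [/eqP mi|mi].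
    by have -> : i = j by apply: val_inj.
  by apply: cone_coord0 cC => c' c'C; apply: Cm.
- move=> b /(cone_trans (fun c cE => proj1 (eliminate_cone cE))); exact: C0.
have [t xt] := eliminate_lift xsat.
by exists (x + t *: delta_mx j 0).
Qed.

End Farkas.

Section L1Directional.
Variables (R : realFieldType) (m : nat) (v : 'cV[R]_m).
Implicit Types (g h : 'cV[R]_m).

(* The one-sided derivative of [l1norm] at [v] in direction [g]. *)
Definition l1_dir g :=
  \sum_k (if v k 0 == 0 then `|g k 0| else Num.sg (v k 0) * g k 0).

Lemma l1_dir0 : l1_dir 0 = 0.
Proof. by rewrite /l1_dir big1 // => k _; rewrite mxE normr0 mulr0 if_same. Qed.

Lemma l1_dirD g h : l1_dir (g + h) <= l1_dir g + l1_dir h.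
Proof.
rewrite /l1_dir -big_split; apply: ler_sum => k _; rewrite mxE.
by case: ifP => _; [exact: ler_normD | rewrite mulrDr].
Qed.

Lemma l1_dirZ t g : 0 <= t -> l1_dir (t *: g) = t * l1_dir g.
Proof.
move=> t_ge0; rewrite /l1_dir mulr_sumr; apply: eq_bigr => k _; rewrite mxE.
by case: ifP => _; [rewrite normrM ger0_norm | rewrite mulrCA].
Qed.

Lemma l1_dir_unit (k : 'I_m) s :
  l1_dir (s *: delta_mx k 0) = if v k 0 == 0 then `|s| else Num.sg (v k 0) * s.
Proof.
rewrite /l1_dir (bigD1 k) //= big1 => [|k' k'k]; rewrite !mxE ?eqxx ?mulr1 ?addr0 //.
by rewrite (negbTE k'k) mulr0 normr0 mulr0 if_same.
Qed.

Lemma l1norm_step g t : 0 <= t -> (forall k, v k 0 != 0 -> t * `|g k 0| <= `|v k 0|) ->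
  l1norm (v + t *: g) = l1norm v + t * l1_dir g.
Proof.
move=> t_ge0 small; rewrite /l1norm /l1_dir mulr_sumr -big_split; apply: eq_bigr => k _.
rewrite /= !mxE; case: eqP => [->|/eqP vk0].
  by rewrite normr0 !add0r normrM ger0_norm.
rewrite normr_add_small ?normrM ?(ger0_norm t_ge0) ?small //.
by rewrite mulrDr [`|_|]normrEsg mulrCA.
Qed.

Lemma l1norm_sg (u : 'cV[R]_m) : (forall k, v k 0 != 0 -> u k 0 = Num.sg (v k 0)) ->
  l1norm v = \sum_k u k 0 * v k 0.
Proof.
move=> u_sg; apply: eq_bigr => k _.
by case: (eqVneq (v k 0) 0) => [->|/u_sg ->]; rewrite ?normr0 ?mulr0 -?normrEsg.
Qed.

End L1Directional.

Section L1BoxOptimality.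
Variables (R : realFieldType) (m n : nat) (D : 'M[R]_(m, n)) (M : {set 'I_n}).
Variables (y : 'cV[R]_n) (eps : R) (z : 'cV[R]_n).
Hypotheses (eps_gt0 : 0 < eps) (z_feasible : feasible M y eps z).
Implicit Types (d : 'cV[R]_n) (u : 'cV[R]_m).

Definition l1_optimal :=
  forall z', feasible M y eps z' -> l1norm (D *m z) <= l1norm (D *m z').

Definition dual_certificate (u : 'cV[R]_m) : Prop :=
  let DTu := D^T *m u in
  (forall i, (i \notin M) || ((i \in M) && (`|y i 0 - z i 0| != eps)) -> DTu i 0 = 0) /\
  (forall k, (D *m z) k 0 != 0 -> u k 0 = Num.sg ((D *m z) k 0)) /\
  (forall k, `|u k 0| <= 1) /\
  (forall i, i \in M -> y i 0 - z i 0 = eps -> 0 <= DTu i 0) /\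
  (forall i, i \in M -> y i 0 - z i 0 = - eps -> DTu i 0 <= 0).

Definition at_lower i := (i \in M) && (y i 0 - z i 0 == eps).
Definition at_upper i := (i \in M) && (y i 0 - z i 0 == - eps).

Lemma at_lower_upper i : at_lower i -> ~~ at_upper i.
Proof.
case/andP => _ /eqP e; rewrite /at_upper e negb_and; apply/orP; right.
apply/eqP => h; move: eps_gt0 h; lra.
Qed.

Lemma inactive_not_at_bound i :
  (i \notin M) || ((i \in M) && (`|y i 0 - z i 0| != eps)) ->
  ~~ at_lower i && ~~ at_upper i.
Proof.
case/orP => [/negbTE iM | /andP [iM ne]]; rewrite /at_lower /at_upper iM //=.
by apply/andP; split; apply: contra ne => /eqP ->; rewrite ?normrN gtr0_norm.
Qed.

(* Directions along which [z] stays feasible for small steps. *)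
Definition admissible (d : 'cV[R]_n) :=
  [forall i, (at_lower i ==> (0 <= d i 0)) && (at_upper i ==> (d i 0 <= 0))].

Lemma admissibleP d : reflect
  (forall i, (at_lower i -> 0 <= d i 0) /\ (at_upper i -> d i 0 <= 0)) (admissible d).
Proof.
apply: (iffP forallP) => adm i; first by have /andP [/implyP ? /implyP ?] := adm i.
by have [lo up] := adm i; apply/andP; split; apply/implyP.
Qed.

Lemma admissible0 : admissible 0.
Proof. by apply/admissibleP => i; rewrite mxE lexx. Qed.

Lemma admissibleD d d' : admissible d -> admissible d' -> admissible (d + d').
Proof.
move=> /admissibleP adm /admissibleP adm'; apply/admissibleP => i; rewrite mxE.
have [lo up] := adm i; have [lo' up'] := adm' i; split=> act.
  by apply: addr_ge0; auto.
by have := up act; have := up' act; lra.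
Qed.

Lemma admissibleZ k d : 0 <= k -> admissible d -> admissible (k *: d).
Proof.
move=> k_ge0 /admissibleP adm; apply/admissibleP => i; rewrite mxE.
by have [lo up] := adm i; split=> act; [apply: mulr_ge0 | apply: mulr_ge0_le0]; auto.
Qed.

Lemma admissible_unit i s : (at_lower i -> 0 <= s) -> (at_upper i -> s <= 0) ->
  admissible (s *: delta_mx i 0).
Proof.
move=> lo up; apply/admissibleP => i'; rewrite !mxE.
by case: eqVneq => [->|_]; rewrite /= ?mulr1 ?mulr0 ?lexx.
Qed.

Lemma admissible_slack_gt0 d : admissible d -> forall i, i \in M ->
  0 < eps - Num.sg (d i 0) * (z i 0 - y i 0).
Proof.
move=> /admissibleP adm i iM; have [lo up] := adm i.
apply: (box_slack_gt0 eps_gt0 (z_feasible iM)) => e; [apply: lo | apply: up];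
  rewrite /at_lower /at_upper iM /=; apply/eqP; move: e; lra.
Qed.

Lemma feasible_step d t : 0 <= t ->
  (forall i, i \in M -> t * `|d i 0| <= eps - Num.sg (d i 0) * (z i 0 - y i 0)) ->
  feasible M y eps (z + t *: d).
Proof.
move=> t_ge0 small i iM; rewrite !mxE addrAC.
exact: box_step (z_feasible iM) t_ge0 (small i iM).
Qed.

Lemma l1_optimal_dir_ge0 d : l1_optimal -> admissible d ->
  0 <= l1_dir (D *m z) (D *m d).
Proof.
move=> opt d_adm.
have [t1 t1_gt0 feas_t1] := exists_small_step (fun i => d i 0)
  (admissible_slack_gt0 d_adm).
have Dz_norm_gt0 k : (D *m z) k 0 != 0 -> 0 < `|(D *m z) k 0| by rewrite normr_gt0.
have [t2 t2_gt0 sign_t2] := exists_small_step (fun k => (D *m d) k 0) Dz_norm_gt0.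
pose t := Num.min t1 t2.
have t_gt0 : 0 < t by rewrite lt_min t1_gt0 t2_gt0.
have shrink t' (a b : R) : t <= t' -> t' * `|a| <= b -> t * `|a| <= b.
  by move=> le_t le_b; apply: le_trans le_b; rewrite ler_wpM2r.
have feas : feasible M y eps (z + t *: d).
  apply: feasible_step (ltW t_gt0) _ => i /feas_t1.
  by apply: shrink; rewrite ge_min lexx.
have := opt _ feas; rewrite mulmxDr -scalemxAr l1norm_step ?(ltW t_gt0) //.
  by rewrite lerDl pmulr_rge0.
by move=> k /sign_t2; apply: shrink; rewrite ge_min lexx orbT.
Qed.

(* The first block encodes the sign conditions on [D^T u], the second says
   that [u] is a subgradient of [l1norm] at [D z]. *)
Definition dual_constraints : seq ('rV[R]_m * R) :=
  [seq (- (D *m d)^T, 0) | d <- unit_dirs R n & admissible d] ++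
  [seq (g^T, l1_dir (D *m z) g) | g <- unit_dirs R m].

Lemma dual_cone_decomp a b : cone dual_constraints a b ->
  exists d g, [/\ admissible d, a = g^T - (D *m d)^T & l1_dir (D *m z) g <= b].
Proof.
elim=> [|c|a1 b1 a2 b2 _ [d1 [g1 [adm1 -> le1]]] _ [d2 [g2 [adm2 -> le2]]]|
         k a1 b1 k_ge0 _ [d1 [g1 [adm1 -> le1]]]].
- by exists 0, 0; rewrite mulmx0 trmx0 subr0 l1_dir0 admissible0.
- rewrite mem_cat => /orP [/mapP [d] | /mapP [g _ ->]]; last first.
    by exists 0, g; rewrite mulmx0 trmx0 subr0 admissible0.
  by rewrite mem_filter => /andP [adm _] ->; exists d, 0; rewrite trmx0 sub0r l1_dir0.
- exists (d1 + d2), (g1 + g2); split; first exact: admissibleD.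
    by rewrite mulmxDr !linearD /= addrACA.
  exact: le_trans (l1_dirD _ _ _) (lerD le1 le2).
- exists (k *: d1), (k *: g1); split; first exact: admissibleZ.
    by rewrite -scalemxAr !linearZ /= scalerDr.
  by rewrite l1_dirZ // ler_wpM2l.
Qed.

Lemma satisfies_dual_dir u i s : satisfies dual_constraints u -> s \in [:: 1; -1] ->
  (at_lower i -> 0 <= s) -> (at_upper i -> s <= 0) -> 0 <= s * (D^T *m u) i 0.
Proof.
move=> usat s_pm lo up.
have /usat : (- (D *m (s *: delta_mx i 0))^T, 0) \in dual_constraints.
  by rewrite mem_cat map_f // mem_filter mem_unit_dirs // admissible_unit.
by rewrite /= mulNmx mxE oppr_le0 trmx_mul -mulmxA trmx_unit_mul.
Qed.

Lemma satisfies_dual_unit u k s : satisfies dual_constraints u -> s \in [:: 1; -1] ->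
  s * u k 0 <= (if (D *m z) k 0 == 0 then `|s| else Num.sg ((D *m z) k 0) * s).
Proof.
move=> usat s_pm; rewrite -l1_dir_unit -trmx_unit_mul; apply: (usat (_^T, _)).
by rewrite mem_cat map_f ?orbT // mem_unit_dirs.
Qed.

Lemma dual_solution_certificate u : satisfies dual_constraints u -> dual_certificate u.
Proof.
move=> usat; pose DTu := D^T *m u.
have pos_pm : (1 : R) \in [:: 1; -1] := mem_head _ _.
have neg_pm : (-1 : R) \in [:: 1; -1] by rewrite !inE eqxx orbT.
have dir_ge0 i s := @satisfies_dual_dir u i s usat.
have unit_le k s := @satisfies_dual_unit u k s usat.
have DTu_ge0 i : ~~ at_upper i -> 0 <= DTu i 0.
  move=> not_up; rewrite -[DTu i 0]mul1r; apply: dir_ge0 => [|_|up].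
  - exact: pos_pm.
  - exact: ler01.
  - by rewrite up in not_up.
have DTu_le0 i : ~~ at_lower i -> DTu i 0 <= 0.
  move=> not_lo; rewrite -oppr_ge0 -mulN1r; apply: dir_ge0 => [|lo|_].
  - exact: neg_pm.
  - by rewrite lo in not_lo.
  - by rewrite lerN10.
have u_sg k : (D *m z) k 0 != 0 -> u k 0 = Num.sg ((D *m z) k 0).
  move=> nz; have := unit_le k 1 pos_pm; have := unit_le k (-1) neg_pm.
  by rewrite (negbTE nz) !mulN1r !mul1r mulr1 mulrN1 lerN2 => ge le; apply/le_anti/andP.
split; [|split; [exact: u_sg|split; [|split]]].
- move=> i /inactive_not_at_bound /andP [not_lo not_up].
  by apply/le_anti; rewrite DTu_le0 ?DTu_ge0.
- move=> k; case: (eqVneq ((D *m z) k 0) 0) => [v0|nz]; last first.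
    by rewrite u_sg // normr_sg nz.
  have := unit_le k 1 pos_pm; have := unit_le k (-1) neg_pm.
  by rewrite v0 eqxx normrN normr1 !mulN1r !mul1r lerNl ler_norml => -> ->.
- by move=> i iM e; apply/DTu_ge0/at_lower_upper; rewrite /at_lower iM e eqxx.
- move=> i iM e; apply/DTu_le0/(contraL (@at_lower_upper i)).
  by rewrite /at_upper iM e eqxx.
Qed.

Lemma l1_optimal_certificate : l1_optimal -> exists u, dual_certificate u.
Proof.
move=> opt; have [|u usat] := @farkas _ _ dual_constraints.
  move=> b /dual_cone_decomp [d [g [d_adm g_eq le_b]]].
  have Dd : D *m d = g by apply: trmx_inj; apply/eqP; rewrite eq_sym -subr_eq0 -g_eq.
  by apply: le_trans le_b; rewrite -Dd; apply: l1_optimal_dir_ge0.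
by exists u; apply: dual_solution_certificate.
Qed.

Lemma certificate_l1_optimal u : dual_certificate u -> l1_optimal.
Proof.
move=> [free [u_sg [u_le1 [lower upper]]]] z' z'_feas.
have slack i : (D^T *m u) i 0 * z i 0 <= (D^T *m u) i 0 * z' i 0.
  case iM : (i \in M); last by rewrite free ?iM // !mul0r.
  case: (eqVneq `|y i 0 - z i 0| eps) => [act|inact].
    2: by rewrite free ?iM ?inact // !mul0r.
  have := z'_feas i iM; rewrite ler_norml => /andP [lo hi].
  move/eqP: act; rewrite eqr_norml => /andP [/orP [/eqP e | /eqP e] _].
  - by have := lower i iM e; nra.
  - by have := upper i iM e; nra.
rewrite (l1norm_sg u_sg) sum_mul_trmx (le_trans (ler_sum _ (fun i _ => slack i))) //.
rewrite -sum_mul_trmx; apply: ler_sum => k _.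
by rewrite (le_trans (ler_norm _)) // normrM ler_piMl.
Qed.

Theorem l1_optimal_iff_certificate : l1_optimal <-> exists u, dual_certificate u.
Proof.
split; first exact: l1_optimal_certificate.
by case=> u /certificate_l1_optimal.
Qed.

End L1BoxOptimality.

Theorem corollary2 (R : realType) (r c : nat) (hr : (3 <= r)%N) (hc : (3 <= c)%N)
  (M : {set 'I_(c * r)}) (eps : R) (heps : 0 < eps) (y : 'cV[R]_(c * r))
  (Z : 'M[R]_(r, c))
  (hfeas : feasible M y eps (vecc Z)) :
  let z := vecc Z in
  let Dz := Delta R r c *m z in
  (forall z' : 'cV[R]_(c * r), feasible M y eps z' ->
     l1norm Dz <= l1norm (Delta R r c *m z'))
  <->
  (exists u : 'cV[R]_(c * (r - 2) + (c - 2) * r),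
     let DTu := (Delta R r c)^T *m u in
     (* rows in  Mbar ∪ Abar : not sampled, or sampled but not active *)
     (forall i, (i \notin M) || ((i \in M) && (`|y i 0 - z i 0| != eps)) ->
        DTu i 0 = 0) /\
     (forall k, Dz k 0 != 0 -> u k 0 = Num.sg (Dz k 0)) /\
     (forall k, `|u k 0| <= 1) /\
     (forall i, i \in M -> y i 0 - z i 0 = eps -> 0 <= DTu i 0) /\
     (forall i, i \in M -> y i 0 - z i 0 = - eps -> DTu i 0 <= 0)).
Proof. exact: (l1_optimal_iff_certificate (Delta R r c) heps hfeas). Qed.
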